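(* Let $\Sigma=\{(x,u(x)):x\in\Omega\}$ be a smooth strictly locally convex graph in $\mathbb{H}^{n+1}$ over a bounded domain $\Omega\subset\mathbb{R}^n$, with $u\ge\epsilon$ in $\Omega$ and $u=\epsilon$ on $\partial\Omega$ for some $\epsilon>0$. Then \[ \frac{1}{\nu^{n+1}}\le\max\Big\{\frac{\max_\Omega u}{u},\ \max_{\partial\Omega}\frac{1}{\nu^{n+1}}\Big\}\quad\text{in }\Omega. \]
   Context: Half-space model $\mathbb{H}^{n+1}=\{(x,x_{n+1}):x_{n+1}>0\}$, metric $\sum dx_i^2/x_{n+1}^2$. The graph is oriented upward; strictly locally convex means all hyperbolic principal curvatures are positive, equivalently the matrix $\{\delta_{ij}+u_iu_j+uu_{ij}\}$ is positive definite. $\nu^{n+1}=1/\sqrt{1+|Du|^2}$ is the last component of the upward Euclidean unit normal. *)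

From HB Require Import structures.
From mathcomp Require Import all_boot all_order all_algebra.
From mathcomp Require Import all_classical all_reals all_analysis.
Set Implicit Arguments. Unset Strict Implicit. Unset Printing Implicit Defensive.
Import Order.TTheory GRing.Theory Num.Theory.
Import numFieldNormedType.Exports.
Local Open Scope classical_set_scope.
Local Open Scope ring_scope.

Section Defs.
Variables (R : realType) (n : nat).
Local Notation V := ('rV[R]_n).

Definition ebasis (i : 'I_n) : V := delta_mx 0 i.

Definition partial (i : 'I_n) (f : V -> R) : V -> R :=
  fun x => derive f x (ebasis i).

Fixpoint iter_partial (l : seq 'I_n) (f : V -> R) : V -> R :=
  match l with
  | [::] => f
  | i :: l' => partial i (iter_partial l' f)
  end.

Definition smooth_on (U : set V) (f : V -> R) : Prop :=
  forall l : seq 'I_n,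
    (forall x, U x -> {for x, continuous (iter_partial l f)}) /\
    (forall x i, U x -> derivable (iter_partial l f) x (ebasis i)).

Definition bounded_domain (O : set V) : Prop :=
  O !=set0 /\ open O /\ connected O /\ exists M : R, forall x, O x -> `|x| <= M.

Definition bdry (O : set V) : set V := closure O `\` O.

Definition posdef (A : 'M[R]_n) : Prop :=
  forall v : V, v != 0 -> 0 < (v *m A *m v^T) 0 0.

Definition convexity_matrix (u : V -> R) (x : V) : 'M[R]_n :=
  \matrix_(i, j) ((i == j)%:R + partial i u x * partial j u x
                  + u x * partial i (partial j u) x).

(* strictly locally convex graph over O (hyperbolic principal curvatures > 0) *)
Definition strictly_locally_convex (O : set V) (u : V -> R) : Prop :=
  forall x, O x -> posdef (convexity_matrix u x).

(* 1 / nu^{n+1} = sqrt(1 + |Du|^2) *)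
Definition inv_nu (u : V -> R) (x : V) : R :=
  Num.sqrt (1 + \sum_i (partial i u x) ^+ 2).

End Defs.

From HB Require Import structures.
From mathcomp Require Import all_boot all_order all_algebra.
From mathcomp Require Import all_classical all_reals all_analysis.
From mathcomp Require Import ring.
Set Implicit Arguments. Unset Strict Implicit. Unset Printing Implicit Defensive.
Import Order.TTheory GRing.Theory Num.Theory.
Import numFieldNormedType.Exports.
Local Open Scope classical_set_scope.
Local Open Scope ring_scope.

(** The function [(u / nu^{n+1})^2 = u^2 (1 + |Du|^2)] attains its maximum over
    the closure of [Omega] at some point [z].  Its gradient is [2 u A Du], where
    [A = {delta_ij + u_i u_j + u u_ij}] is the convexity matrix; so if [z] is
    interior, positive definiteness of [A] forces [Du(z) = 0], whence
    [u / nu^{n+1} <= u(z) <= max u].  If [z] is on the boundary, then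
    [u(z) = eps <= u], and [u / nu^{n+1} <= eps / nu^{n+1}(z)] gives
    [1 / nu^{n+1} <= 1 / nu^{n+1}(z)]. *)

Lemma derive_local_max (R : realType) (V : normedModType R) (f : V -> R) (x v : V) :
  derivable f x v -> (\forall y \near x, f y <= f x) -> 'D_v f x = 0.
Proof.
move=> df fmax.
have line_cvg : (fun h : R => h *: v + x) @ (nbhs (0:R)) --> x.
  rewrite [X in _ --> X](_ : x = 0 *: v + x); last by rewrite scale0r add0r.
  by apply: cvgD; [apply: cvgZr_tmp; exact: cvg_id | exact: cvg_cst].
have fmax_line : \forall h \near (0:R), f (h *: v + x) <= f x := line_cvg _ fmax.
pose q (h : R) := h^-1 *: ((f \o shift x) (h *: v) - f x).
apply/eqP; rewrite eq_le; apply/andP; split.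
- rewrite /derive (cvg_at_rightE q) //; apply: limr_le.
    rewrite -(cvg_at_rightE q) //; apply: cvg_trans df; apply: cvg_app.
    move=> A [e e_gt0 Ae]; exists e => // y ye y_gt0; apply: Ae => //.
    exact/lt0r_neq0.
  move: fmax_line; apply: filterS => h /= fh h_gt0.
  by apply: mulr_ge0_le0; [rewrite invr_ge0 ltW | rewrite subr_le0].
- rewrite /derive (cvg_at_leftE q) //; apply: limr_ge.
    rewrite -(cvg_at_leftE q) //; apply: cvg_trans df; apply: cvg_app.
    move=> A [e e_gt0 Ae]; exists e => // y ye y_lt0; apply: Ae => //.
    exact/ltr0_neq0.
  move: fmax_line; apply: filterS => h /= fh h_lt0.
  by apply: mulr_le0; [rewrite invr_le0 ltW | rewrite subr_le0].
Qed.

Lemma bounded_domain_closure_compact (R : realType) (n : nat) (Omega : set 'rV[R]_n) :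
  bounded_domain Omega -> compact (closure Omega).
Proof.
move=> [_ [_ [_ [M HM]]]].
apply: bounded_closed_compact; last exact: closed_closure.
pose B := closed_ball_ Num.norm (0 : 'rV[R]_n) M.
have sub : closure Omega `<=` B.
  rewrite [X in _ `<=` X](closure_id B).1; last exact: closed_closed_ball_.
  by apply: closureS => y /HM; rewrite /B /closed_ball_ /= sub0r normrN.
exists M; split; first by rewrite num_real.
move=> M' hM' y /sub; rewrite /B /closed_ball_ /= sub0r normrN => h.
by rewrite (le_trans h) // ltW.
Qed.

Lemma le_sup_image_max (R : realType) (T : Type) (A : set T) (f : T -> R) (z : T) :
  A z -> (forall y, A y -> f y <= f z) -> f z <= sup [set f y | y in A].
Proof.
move=> Az fmax; apply: sup_upper_bound; last by exists z.
split; first by exists (f z), z.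
by exists (f z) => _ [y Ay <-]; exact: fmax.
Qed.

Lemma posdef_mulmx_tr_eq0 (R : realType) (n : nat) (A : 'M[R]_n) (v : 'rV[R]_n) :
  posdef A -> A *m v^T = 0 -> v = 0.
Proof.
move=> pdA Av0; apply/eqP; apply: contraT => v_neq0.
by have := pdA v v_neq0; rewrite -mulmxA Av0 mulmx0 mxE ltxx.
Qed.

Section Graph.
Variables (R : realType) (n : nat).
Local Notation V := ('rV[R]_n).
Implicit Types (u : V -> R) (y z : V).

Definition grad u z : V := \row_k partial k u z.

Definition sqr_grad u : V -> R := \sum_k (partial k u * partial k u).

Definition sqr_u_inv_nu u : V -> R := u * u * (cst 1 + sqr_grad u).

Lemma sqr_gradE u y : sqr_grad u y = \sum_k partial k u y ^+ 2.
Proof. by rewrite /sqr_grad fct_sumE; apply: eq_bigr => k _; rewrite expr2. Qed.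

Lemma inv_nuE u y : inv_nu u y = Num.sqrt (1 + sqr_grad u y).
Proof. by rewrite /inv_nu sqr_gradE. Qed.

Lemma inv_nu_ge1 u y : 1 <= inv_nu u y.
Proof.
rewrite inv_nuE -{1}sqrtr1 ler_wsqrtr // lerDl sqr_gradE.
by apply: sumr_ge0 => k _; exact: sqr_ge0.
Qed.

Lemma mul_u_inv_nu u y : 0 <= u y -> u y * inv_nu u y = Num.sqrt (sqr_u_inv_nu u y).
Proof.
move=> u_ge0; rewrite /sqr_u_inv_nu /= -expr2 sqrtrM ?sqr_ge0 //.
by rewrite sqrtr_sqr ger0_norm // inv_nuE.
Qed.

Lemma inv_nu_grad0 u z : grad u z = 0 -> inv_nu u z = 1.
Proof.
move=> Du0; rewrite inv_nuE sqr_gradE big1 ?addr0 ?sqrtr1 // => k _.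
by have := congr1 (fun v : V => v 0 k) Du0; rewrite !mxE => ->; rewrite expr0n.
Qed.

Lemma continuous_sqr_u_inv_nu (U : set V) u y :
  smooth_on U u -> U y -> {for y, continuous (sqr_u_inv_nu u)}.
Proof.
move=> u_smooth Uy.
have cu : {for y, continuous u} := (u_smooth [::]).1 y Uy.
have cDu k : {for y, continuous (partial k u)} := (u_smooth [:: k]).1 y Uy.
have cS : {for y, continuous (sqr_grad u)}.
  apply: (big_ind (fun f : V -> R => {for y, continuous f})).
  - exact: cst_continuous.
  - by move=> f g cf cg; apply: continuousD.
  - by move=> k _; apply: continuousM.
apply: continuousM; first exact: continuousM.
by apply: continuousD => //; exact: cst_continuous.
Qed.

Lemma convexity_matrix_grad u z i :
  (convexity_matrix u z *m (grad u z)^T) i 0 =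
  (1 + sqr_grad u z) * partial i u z
  + u z * \sum_k partial k u z * partial i (partial k u) z.
Proof.
rewrite !mxE sqr_gradE.
under eq_bigr do rewrite !mxE !mulrDl.
rewrite !big_split /= (bigD1 i) //= eqxx mul1r big1 ?addr0; last first.
  by move=> k /negbTE; rewrite eq_sym => ->; rewrite mul0r.
have E1 : \sum_k partial i u z * partial k u z * partial k u z
    = (\sum_k partial k u z ^+ 2) * partial i u z.
  by rewrite mulr_suml; apply: eq_bigr => k _; rewrite expr2 [RHS]mulrC mulrA.
have E2 : \sum_k u z * partial i (partial k u) z * partial k u z
    = u z * \sum_k partial k u z * partial i (partial k u) z.
  by rewrite mulr_sumr; apply: eq_bigr => k _; ring.
by rewrite E1 E2 mulrDl mul1r.
Qed.

Lemma derive_sqr_u_inv_nu (U : set V) u z (i : 'I_n) :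
  smooth_on U u -> U z ->
  derivable (sqr_u_inv_nu u) z (ebasis R i) /\
  'D_(ebasis R i) (sqr_u_inv_nu u) z
    = 2 * u z * (convexity_matrix u z *m (grad u z)^T) i 0.
Proof.
move=> u_smooth Uz; rewrite convexity_matrix_grad.
have du : derivable u z (ebasis R i) := (u_smooth [::]).2 z i Uz.
have dDu k : derivable (partial k u) z (ebasis R i) := (u_smooth [:: k]).2 z i Uz.
have dDu2 k : derivable (partial k u * partial k u) z (ebasis R i).
  exact: derivableM (dDu k) (dDu k).
have d1 : derivable (cst (1 : R)) z (ebasis R i) := derivable_cst _ _ _.
have dS : derivable (sqr_grad u) z (ebasis R i) by apply: derivable_sum.
have d1S : derivable (cst 1 + sqr_grad u) z (ebasis R i) := derivableD d1 dS.
have duu : derivable (u * u) z (ebasis R i) := derivableM du du.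
split; first exact: derivableM duu d1S.
rewrite (deriveM duu d1S) (deriveM du du) (deriveD d1 dS) derive_cst add0r.
rewrite (derive_sum dDu2) mulr_sumr.
under eq_bigr do rewrite (deriveM (dDu _) (dDu _)).
rewrite /GRing.scale /= mulr_sumr [in RHS]mulrDr [X in _ = _ + X]mulr_sumr addrC.
congr (_ + _).
  by rewrite -[LHS]/((1 + sqr_grad u z) * (u z * partial i u z + u z * partial i u z)); ring.
apply: eq_bigr => k _.
pose Dk := partial i (partial k u) z.
rewrite -[LHS]/(u z * u z * (partial k u z * Dk + partial k u z * Dk)).
by rewrite -[RHS]/(2 * u z * (u z * (partial k u z * Dk))); ring.
Qed.

Section AtMaximum.
Variables (Omega U : set V) (u : V -> R) (z : V).
Hypotheses (Omega_open : open Omega) (clOmega_sub : closure Omega `<=` U).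
Hypotheses (u_smooth : smooth_on U u) (u_gt0 : forall y, closure Omega y -> 0 < u y).
Hypothesis clOmega_z : closure Omega z.
Hypothesis z_max :
  forall y, closure Omega y -> sqr_u_inv_nu u y <= sqr_u_inv_nu u z.

Lemma u_inv_nu_le_max y : closure Omega y -> u y * inv_nu u y <= u z * inv_nu u z.
Proof.
move=> clOmega_y; have u_ge0 w : closure Omega w -> 0 <= u w by move/u_gt0/ltW.
by rewrite !mul_u_inv_nu ?u_ge0 // ler_wsqrtr ?z_max.
Qed.

Lemma inv_nu_interior_max : Omega z -> posdef (convexity_matrix u z) -> inv_nu u z = 1.
Proof.
move=> Omega_z A_posdef; apply: inv_nu_grad0; apply: (posdef_mulmx_tr_eq0 A_posdef).
apply/matrixP => i j; rewrite ord1 [RHS]mxE.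
have [dF DF] := derive_sqr_u_inv_nu i u_smooth (clOmega_sub clOmega_z).
have F_near_max : \forall y \near z, sqr_u_inv_nu u y <= sqr_u_inv_nu u z.
  apply: filterS (open_nbhs_nbhs (conj Omega_open Omega_z)) => y Omega_y.
  exact/z_max/subset_closure.
move: (derive_local_max dF F_near_max); rewrite DF => /eqP.
by rewrite !mulf_eq0 pnatr_eq0 (gt_eqF (u_gt0 clOmega_z)) /= => /eqP.
Qed.

Lemma inv_nu_le_at_interior_max x :
  Omega z -> posdef (convexity_matrix u z) -> closure Omega x ->
  inv_nu u x <= sup [set u y | y in closure Omega] / u x.
Proof.
move=> Omega_z A_posdef clOmega_x.
have u_le_uz y : closure Omega y -> u y <= u z.
  move=> clOmega_y; have := u_inv_nu_le_max clOmega_y.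
  rewrite inv_nu_interior_max // mulr1; apply: le_trans.
  by rewrite ler_peMr ?inv_nu_ge1 // ltW ?u_gt0.
rewrite ler_pdivlMr ?u_gt0 // mulrC.
apply: le_trans (le_sup_image_max clOmega_z u_le_uz).
by have := u_inv_nu_le_max clOmega_x; rewrite inv_nu_interior_max // mulr1.
Qed.

Lemma inv_nu_le_at_max y : closure Omega y -> u z <= u y -> inv_nu u y <= inv_nu u z.
Proof.
move=> clOmega_y uz_le_uy; rewrite -(ler_pM2l (u_gt0 clOmega_y)).
apply: le_trans (u_inv_nu_le_max clOmega_y) _.
by rewrite ler_wpM2r // (le_trans ler01) ?inv_nu_ge1.
Qed.

End AtMaximum.
End Graph.

Unset Implicit Arguments.

Theorem proposition3p2 (R : realType) (n : nat) (Omega U : set 'rV[R]_n)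
  (u : 'rV[R]_n -> R) (eps : R) :
  bounded_domain Omega ->
  open U -> closure Omega `<=` U -> smooth_on U u ->
  strictly_locally_convex Omega u ->
  0 < eps ->
  (forall x, Omega x -> eps <= u x) ->
  (forall x, bdry Omega x -> u x = eps) ->
  forall x, Omega x ->
    inv_nu u x <=
    Num.max (sup [set u y | y in closure Omega] / u x)
            (sup [set inv_nu u y | y in bdry Omega]).
Proof.
move=> Omega_bd U_open clOmega_sub u_smooth u_convex eps_gt0 u_ge_eps u_bdry x Omega_x.
have Omega_open : open Omega by case: Omega_bd => _ [].
have clOmega_split y : closure Omega y -> Omega y \/ bdry Omega y.
  by move=> clOmega_y; have [|] := pselect (Omega y); [left | right].
have u_ge_eps_cl y : closure Omega y -> eps <= u y.
  by move=> /clOmega_split [/u_ge_eps | /u_bdry ->].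
have u_gt0 y : closure Omega y -> 0 < u y.
  by move=> /u_ge_eps_cl; exact: lt_le_trans.
have clOmega_x : closure Omega x := subset_closure Omega_x.
have [z /set_mem clOmega_z z_max] :
    exists2 z, z \in closure Omega & forall y, y \in closure Omega ->
      sqr_u_inv_nu u y <= sqr_u_inv_nu u z.
  apply: EVT_max_rV; [by exists x | exact: bounded_domain_closure_compact |].
  apply: continuous_in_subspaceT => y /set_mem clOmega_y.
  exact: continuous_sqr_u_inv_nu u_smooth (clOmega_sub _ clOmega_y).
have {}z_max y : closure Omega y -> sqr_u_inv_nu u y <= sqr_u_inv_nu u z.
  by move=> clOmega_y; apply/z_max/mem_set.
rewrite le_max; case: (clOmega_split z clOmega_z) => [z_interior | z_bdry].
  by rewrite (inv_nu_le_at_interior_max Omega_open clOmega_sub u_smooth u_gt0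
    clOmega_z z_max z_interior (u_convex z z_interior) clOmega_x).
have inv_nu_le_z : forall y, closure Omega y -> u z <= u y -> inv_nu u y <= inv_nu u z.
  exact: inv_nu_le_at_max u_gt0 clOmega_z z_max.
apply/orP; right; apply: le_trans (inv_nu_le_z x clOmega_x _) _.
  by rewrite u_bdry // u_ge_eps.
apply: (le_sup_image_max z_bdry) => y bdry_y.
by apply: inv_nu_le_z; [case: bdry_y | rewrite (u_bdry _ z_bdry) (u_bdry _ bdry_y)].
Qed.
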